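(* There are constants $C_0,r>0$ such that for $k>\sqrt n$ the following holds with probability at least $1-e^{-n^r}$ over $G'\sim G(n,\tfrac12)$: for every set $K$ of $k$ vertices, if $G$ is obtained from $G'$ by adding all missing edges inside $K$, then every maximum clique $K'$ of $G$ satisfies $|K'\cap K|\ge k-C_0\log n$ and $|K'\setminus K|\le C_0\log n$.
   Context: $G(n,p)$ denotes the Erdős–Rényi random graph on $n$ vertices with edge probability $p$. Logarithms are base $2$. (This is the statement that, for $G\sim AG(n,\tfrac12,k)$ with $k>\sqrt n$, with extremely high probability—probability of the form $1-e^{-n^r}$—simultaneously for all adversarial choices, the maximum clique contains all but $O(\log n)$ vertices of the planted clique and at most $O(\log n)$ other vertices.) *)

From mathcomp Require Import all_boot.
From Stdlib Require Import Reals.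

Set Implicit Arguments.
Unset Strict Implicit.
Unset Printing Implicit Defensive.

Definition edges (n : nat) : {set {set 'I_n}} := [set e : {set 'I_n} | #|e| == 2].

(* A graph G' on 'I_n is an edge set E \subset edges n.
   G(n,1/2) is the uniform distribution on all such E. *)
Definition graphs (n : nat) : {set {set {set 'I_n}}} := powerset (edges n).

Definition gnp_half_prob (n : nat) (P : pred {set {set 'I_n}}) : R :=
  (INR #|[set E in graphs n | P E]| / INR #|graphs n|)%R.

Definition planted_adj (n : nat) (E : {set {set 'I_n}}) (K : {set 'I_n})
  (x y : 'I_n) : bool :=
  (x != y) && (([set x; y] \in E) || ((x \in K) && (y \in K))).

Definition is_clique (n : nat) (adj : 'I_n -> 'I_n -> bool) (S : {set 'I_n}) : bool :=
  [forall x in S, forall y in S, (x != y) ==> adj x y].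

Definition is_max_clique (n : nat) (adj : 'I_n -> 'I_n -> bool) (S : {set 'I_n}) : bool :=
  is_clique adj S && [forall T : {set 'I_n}, is_clique adj T ==> (#|T| <= #|S|)].

Definition Rleb (a b : R) : bool := if Rle_dec a b then true else false.

Definition log2 (x : R) : R := (ln x / ln 2)%R.

Definition good_event (n k : nat) (C0 : R) (E : {set {set 'I_n}}) : bool :=
  [forall K : {set 'I_n}, (#|K| == k) ==>
    [forall K' : {set 'I_n}, is_max_clique (planted_adj E K) K' ==>
       (Rleb (INR k - C0 * log2 (INR n))%R (INR #|K' :&: K|) &&
        Rleb (INR #|K' :\: K|) (C0 * log2 (INR n))%R)]].

From Stdlib Require Import Reals Lra.
From mathcomp Require Import all_boot zify.

(* Suppose some maximum clique K' of the planted graph has more than 18 log n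
   vertices outside the planted clique K.  Take a set X of m ~ 8 log n of them
   and a set Z of z = max(m, k - m) other vertices of K', which exist because
   |K'| >= k.  Since X misses K, every X-Z edge is already an edge of G', so G'
   contains a complete bipartite graph K_{m,z}.  A union bound over the at most
   n^(m+z) choices of (X, Z) bounds the probability of this by
   n^(m+z) 2^(-mz) <= 2^(-27k/8) <= e^(-k) < e^(-sqrt n).  Otherwise
   |K' :\: K| <= 18 log n, and then |K'| >= k gives |K' :&: K| >= k - 18 log n. *)

Set Implicit Arguments.
Unset Strict Implicit.
Unset Printing Implicit Defensive.

Lemma leq_bin_exp n k : 'C(n, k) <= n ^ k.
Proof.
apply: leq_trans (leq_pmulr _ (fact_gt0 k)) _.
rewrite bin_ffact ffact_prod.
apply: (@leq_trans (\prod_(i < k) n)); last by rewrite prod_nat_const card_ord.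
by apply: leq_prod => i _; exact: leq_subr.
Qed.

Lemma card_bigcup_leq (I T : finType) (A : {set I}) (F : I -> {set T}) :
  #|\bigcup_(i in A) F i| <= \sum_(i in A) #|F i|.
Proof.
elim/big_rec2: _ => [|i x y _ IH]; first by rewrite cards0.
by apply: leq_trans (leq_card_setU _ _) _; rewrite leq_add2l.
Qed.

Lemma exists_subset_card (T : finType) (A : {set T}) s :
  s <= #|A| -> exists2 X : {set T}, X \subset A & #|X| = s.
Proof.
elim: s => [|s IH] hs; first by exists set0; rewrite ?sub0set ?cards0.
have [X XA cX] := IH (ltnW hs).
have : 0 < #|A :\: X| by rewrite cardsDS // cX subn_gt0.
rewrite card_gt0 => /set0Pn [x]; rewrite inE => /andP [xX xA].
exists (x |: X); first by rewrite subUset sub1set xA XA.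
by rewrite cardsU1 xX cX.
Qed.

Lemma card_supersets (T : finType) (A B : {set T}) :
  B \subset A -> #|[set E in powerset A | B \subset E]| * 2 ^ #|B| <= 2 ^ #|A|.
Proof.
move=> BA.
have sub : [set E in powerset A | B \subset E] \subset
           [set D :|: B | D in powerset (A :\: B)].
  apply/subsetP => E; rewrite inE powersetE => /andP [EA BE].
  apply/imsetP; exists (E :\: B); first by rewrite powersetE setSD.
  by rewrite -{1}(setID E B) (setIidPr BE) setUC.
have := leq_trans (subset_leq_card sub) (leq_imset_card _ _).
rewrite card_powerset cardsDS // => le_sup.
by rewrite -(subnK (subset_leq_card BA)) expnD leq_mul2r le_sup orbT.
Qed.

(* The exponent 8 makes the n^(m+z) choices of (X, Z) negligible:
   (n^8)^(m+z) < 2^(m(m+z)) <= 2^(2mz). *)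
Lemma biclique_union_bound_arith n k m z B N :
  9 <= m -> n ^ 8 < 2 ^ m -> m <= z -> k - m <= z ->
  B * 2 ^ (m * z) <= n ^ (m + z) * 2 ^ N -> B ^ 8 * 2 ^ (27 * k) <= (2 ^ N) ^ 8.
Proof.
move=> m9 n8_lt zm zk count.
have count8 : B ^ 8 * 2 ^ (m * z * 8) <= n ^ ((m + z) * 8) * 2 ^ (N * 8).
  by move: count; rewrite -(@leq_exp2r _ _ 8) // !expnMn -!expnM.
have n8 : n ^ ((m + z) * 8) <= 2 ^ (m * (m + z)).
  by rewrite mulnC !expnM leq_exp2r; [exact: ltnW | lia].
have exps : 2 ^ (27 * k) * 2 ^ (m * (m + z)) <= 2 ^ (m * z * 8).
  by rewrite -expnD leq_pexp2l //; nia.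
rewrite -expnM -(leq_pmul2r (expn_gt0 2 (m * (m + z)))) -mulnA.
apply: leq_trans (leq_mul (leqnn _) exps) _.
by apply: leq_trans count8 _; rewrite [X in _ <= X]mulnC leq_mul2r n8 orbT.
Qed.

Section RealFacts.
Local Open Scope R_scope.

Lemma RlebP a b : reflect (a <= b) (Rleb a b).
Proof. by rewrite /Rleb; case: Rle_dec => h; constructor. Qed.

Lemma INR_expn a b : INR (a ^ b) = INR a ^ b.
Proof. by elim: b => [|b IH] //; rewrite expnS -multE mult_INR IH. Qed.

Lemma ln_le x y : 0 < x -> x <= y -> ln x <= ln y.
Proof. by move=> x0 /Rle_lt_or_eq_dec [/(ln_increasing _ _ x0) | ->]; lra. Qed.

Lemma log2_lt_expn n c a : (0 < n)%N -> INR c * log2 (INR n) < INR a -> (n ^ c < 2 ^ a)%N.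
Proof.
move=> n0 lt_log.
have ln2 : 0 < ln 2 by have := ln_lt_2; lra.
have n_pos : 0 < INR n by apply/lt_0_INR/ltP.
have lt_ln : INR c * ln (INR n) < INR a * ln 2.
  rewrite (_ : INR c * ln (INR n) = INR c * log2 (INR n) * ln 2).
    exact: Rmult_lt_compat_r.
  by rewrite /log2; field; lra.
apply/ltP/INR_lt; rewrite !INR_expn.
apply: ln_lt_inv; try apply: pow_lt; rewrite /= ?ln_pow //; lra.
Qed.

Lemma ratio_le_exp (b G k : nat) :
  (0 < G)%N -> (b ^ 8 * 2 ^ (27 * k) <= G ^ 8)%N -> INR b / INR G <= exp (- INR k).
Proof.
move=> G0 le_bG; have G_pos : 0 < INR G by apply/lt_0_INR/ltP.
have [-> | b0] := eqVneq b 0%N; first by rewrite /Rdiv Rmult_0_l; apply/Rlt_le/exp_pos.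
have b_pos : 0 < INR b by apply/lt_0_INR/ltP; rewrite lt0n.
have le_R : INR b ^ 8 * 2 ^ (27 * k) <= INR G ^ 8.
  have := le_INR _ _ (leP le_bG).
  by rewrite -multE mult_INR !INR_expn (_ : INR 2 = 2) //=; lra.
have ln_le_R : 8 * ln (INR b) + 27 * INR k * ln 2 <= 8 * ln (INR G).
  have b8_pos := pow_lt _ 8 b_pos; have two_pos := pow_lt _ (27 * k) Rlt_0_2.
  have := ln_le (Rmult_lt_0_compat _ _ b8_pos two_pos) le_R.
  rewrite ln_mult // !ln_pow //; last by lra.
  rewrite -multE mult_INR.
  by have [-> ->] : INR 8 = 8 /\ INR 27 = 27 by split; rewrite /INR; lra.
have ln_ratio : ln (INR b) + - ln (INR G) <= - INR k.
  have := ln_lt_2; have := pos_INR k; nra.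
rewrite /Rdiv -(exp_ln _ b_pos) -(exp_ln _ G_pos) -exp_Ropp -exp_plus.
by case: (Rle_lt_or_eq_dec _ _ ln_ratio) => [/exp_increasing | ->]; lra.
Qed.

End RealFacts.

Section Bicliques.
Variable n : nat.
Implicit Types (X Z : {set 'I_n}) (E : {set {set 'I_n}}).

Definition cross_edges X Z : {set {set 'I_n}} :=
  [set [set p.1; p.2] | p in setX X Z].

Definition biclique_sides (m z : nat) : {set {set 'I_n} * {set 'I_n}} :=
  [set p : {set 'I_n} * {set 'I_n} | [&& #|p.1| == m, #|p.2| == z & [disjoint p.1 & p.2]]].

Definition has_biclique (m z : nat) E : bool :=
  [exists p in biclique_sides m z, cross_edges p.1 p.2 \subset E].

Lemma card_cross_edges X Z : [disjoint X & Z] -> #|cross_edges X Z| = #|X| * #|Z|.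
Proof.
move=> dXZ; rewrite card_in_imset ?cardsX //.
move=> [u v] [u' v'] /setXP [/= uX vZ] /setXP [/= u'X v'Z] /= eq_uv.
have uu' : u = u'.
  have : u \in [set u'; v'] by rewrite -eq_uv set21.
  by rewrite in_set2 => /orP [/eqP // | /eqP uv']; rewrite -uv' (disjointFr dXZ uX) in v'Z.
subst u'; congr pair.
have : v \in [set u; v'] by rewrite -eq_uv set22.
by rewrite in_set2 => /orP [/eqP vu | /eqP //]; rewrite vu (disjointFr dXZ uX) in vZ.
Qed.

Lemma cross_edges_subset_edges X Z : [disjoint X & Z] -> cross_edges X Z \subset edges n.
Proof.
move=> dXZ; apply/subsetP => e /imsetP [[u v] /setXP [/= uX vZ] ->].
rewrite inE cards2; case: (u =P v) => [uv|] //.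
by rewrite -uv (disjointFr dXZ uX) in vZ.
Qed.

Lemma card_has_biclique m z :
  #|[set E in graphs n | has_biclique m z E]| * 2 ^ (m * z) <= n ^ (m + z) * 2 ^ #|edges n|.
Proof.
set S := biclique_sides m z.
have sub : [set E in graphs n | has_biclique m z E] \subset
  \bigcup_(p in S) [set E in graphs n | cross_edges p.1 p.2 \subset E].
  apply/subsetP => E; rewrite inE => /andP [EG /existsP [p /andP [pS sE]]].
  by apply/bigcupP; exists p => //; rewrite inE EG.
apply: leq_trans (leq_mul (subset_leq_card sub) (leqnn _)) _.
apply: leq_trans (leq_mul (card_bigcup_leq _ _) (leqnn _)) _.
rewrite big_distrl /=.
have each p : p \in S ->
   #|[set E in graphs n | cross_edges p.1 p.2 \subset E]| * 2 ^ (m * z) <= 2 ^ #|edges n|.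
  rewrite inE => /and3P [/eqP <- /eqP <- dXZ].
  by rewrite -card_cross_edges //; apply: card_supersets; apply: cross_edges_subset_edges.
apply: leq_trans; first by apply: leq_sum; exact: each.
rewrite sum_nat_const leq_mul2r; apply/orP; right.
have sub2 : S \subset setX [set X : {set 'I_n} | #|X| == m] [set Z : {set 'I_n} | #|Z| == z].
  by apply/subsetP => p; rewrite !inE => /and3P [-> -> _].
apply: leq_trans (subset_leq_card sub2) _.
by rewrite cardsX !card_draws card_ord expnD leq_mul // leq_bin_exp.
Qed.

End Bicliques.

Section PlantedClique.
Variables (n : nat) (E : {set {set 'I_n}}) (K : {set 'I_n}).

Lemma planted_clique : is_clique (planted_adj E K) K.
Proof.
apply/forallP => x; apply/implyP => xK; apply/forallP => y; apply/implyP => yK.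
by apply/implyP => xy; rewrite /planted_adj xy xK yK orbT.
Qed.

Lemma max_planted_clique_card K' : is_max_clique (planted_adj E K) K' -> #|K| <= #|K'|.
Proof. by case/andP => _ /forallP /(_ K) /implyP; apply; apply: planted_clique. Qed.

Lemma planted_clique_cross_edges K' (X Z : {set 'I_n}) :
  is_clique (planted_adj E K) K' -> X \subset K' :\: K -> Z \subset K' ->
  [disjoint X & Z] -> cross_edges X Z \subset E.
Proof.
move=> cl XK ZK' dXZ; apply/subsetP => e /imsetP [[u v] /setXP [/= uX vZ] ->].
have /setDP [uK' uK] := subsetP XK u uX.
have vK' := subsetP ZK' v vZ.
have uv : u != v by apply: contraTneq vZ => <-; rewrite (disjointFr dXZ uX).
move/forallP: cl => /(_ u) /implyP /(_ uK') /forallP /(_ v) /implyP /(_ vK') /implyP /(_ uv).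
by rewrite /planted_adj uv (negbTE uK) /= orbF.
Qed.

Lemma max_planted_clique_has_biclique K' m :
  is_max_clique (planted_adj E K) K' -> 2 * m < #|K' :\: K| ->
  has_biclique m (maxn m (#|K| - m)) E.
Proof.
move=> mx out_big; have KK' := max_planted_clique_card mx.
have m_le : m <= #|K' :\: K| by lia.
have [X XK cX] := exists_subset_card m_le.
have XK' : X \subset K' := subset_trans XK (subsetDl _ _).
have big_rest : maxn m (#|K| - m) <= #|K' :\: X|.
  have := subset_leq_card (subsetDl K' K).
  by rewrite (cardsDS XK') cX geq_max; lia.
have [Z ZK' cZ] := exists_subset_card big_rest.
have dXZ : [disjoint X & Z].
  by rewrite disjoint_sym disjoints_subset (subset_trans ZK') // setDE subsetIr.
apply/existsP; exists (X, Z); rewrite inE /= cX cZ !eqxx dXZ /=.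
apply: planted_clique_cross_edges (proj1 (andP mx)) XK (subset_trans ZK' (subsetDl _ _)) dXZ.
Qed.

End PlantedClique.

Lemma good_event_vacuous n k C0 (E : {set {set 'I_n}}) : n < k -> good_event k C0 E.
Proof.
move=> nk; apply/forallP => K; apply/implyP => /eqP cK.
by move: (max_card K); rewrite card_ord cK leqNgt nk.
Qed.

Section GoodEvent.
Local Open Scope R_scope.

Lemma not_good_event_outside n k C0 (E : {set {set 'I_n}}) :
  ~~ good_event k C0 E ->
  exists K K' : {set 'I_n}, [/\ #|K| = k, is_max_clique (planted_adj E K) K' &
                   C0 * log2 (INR n) < INR #|K' :\: K|].
Proof.
case/forallPn => K; rewrite negb_imply => /andP [/eqP cK /forallPn [K']].
rewrite negb_imply => /andP [mx fail]; exists K, K'; split => //.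
have split_K' : INR k <= INR #|K' :&: K| + INR #|K' :\: K|.
  by rewrite -plus_INR; apply/le_INR/leP; rewrite plusE cardsID -cK (max_planted_clique_card mx).
by case/nandP: fail => /RlebP/Rnot_le_lt; lra.
Qed.

End GoodEvent.

(* [small_side n] is the least [m] with [n ^ 8 < 2 ^ m], i.e. about [8 log n]. *)
Definition small_side n := (trunc_log 2 (n ^ 8)).+1.
Definition large_side n k := maxn (small_side n) (k - small_side n).

Lemma small_side_ge9 n : 1 < n -> 9 <= small_side n.
Proof. by move=> n1; rewrite ltnS trunc_log_max // leq_exp2r. Qed.

Lemma ltn_expn8_small_side n : n ^ 8 < 2 ^ small_side n.
Proof. exact: trunc_log_ltn. Qed.

(* 2m <= 16 log n + 2 <= 18 log n: this is where the constant 18 comes from. *)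
Lemma expn_small_side_le n : 1 < n -> 2 ^ (2 * small_side n) <= n ^ 18.
Proof.
move=> n1; have n8 : 0 < n ^ 8 by rewrite expn_gt0 ltnW.
have := trunc_logP (erefl : 1 < 2) n8; rewrite /small_side.
move: (trunc_log 2 _) => t le_t.
rewrite mulnS expnD [2 * t]mulnC expnM (_ : 18 = 2 + 8 * 2) // expnD expnM.
by rewrite leq_mul ?leq_exp2r.
Qed.

Lemma not_good_event_has_biclique n k : 1 < n -> forall E : {set {set 'I_n}},
  ~~ good_event k (INR 18) E -> has_biclique (small_side n) (large_side n k) E.
Proof.
move=> n1 E /not_good_event_outside [K [K' [cK mx outside]]].
rewrite /large_side -cK; apply: max_planted_clique_has_biclique mx _.
rewrite -(ltn_exp2l _ _ (erefl : 1 < 2)).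
exact: leq_ltn_trans (expn_small_side_le n1) (log2_lt_expn (ltnW n1) outside).
Qed.

Lemma card_has_biclique_small_side n k : 1 < n ->
  #|[set E in graphs n | has_biclique (small_side n) (large_side n k) E]| ^ 8 * 2 ^ (27 * k)
    <= (2 ^ #|edges n|) ^ 8.
Proof.
move=> n1; apply: biclique_union_bound_arith (card_has_biclique _ _ _).
- exact: small_side_ge9.
- exact: ltn_expn8_small_side.
- exact: leq_maxl.
- exact: leq_maxr.
Qed.

Section Probability.
Local Open Scope R_scope.

Lemma gnp_half_prob_all n (P : pred {set {set 'I_n}}) :
  (forall E, P E) -> gnp_half_prob P = 1.
Proof.
move=> allP; rewrite /gnp_half_prob (_ : [set E in graphs n | P E] = graphs n).
  by rewrite /Rdiv Rinv_r // card_powerset INR_expn; apply: pow_nonzero; simpl; lra.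
by apply/setP => E; rewrite inE allP andbT.
Qed.

Lemma gnp_half_prob_compl n (P Q : pred {set {set 'I_n}}) :
  (forall E, ~~ P E -> Q E) -> 1 - gnp_half_prob Q <= gnp_half_prob P.
Proof.
move=> PQ; rewrite /gnp_half_prob.
have le_cover : (#|graphs n| <= #|[set E in graphs n | P E]| + #|[set E in graphs n | Q E]|)%N.
  apply: leq_trans (leq_card_setU _ _); apply: subset_leq_card; apply/subsetP => E EG.
  by move: EG; rewrite !inE => ->; case: (boolP (P E)) => //= /PQ.
have G_pos : 0 < INR #|graphs n| by rewrite card_powerset INR_expn; apply: pow_lt; simpl; lra.
have := le_INR _ _ (leP le_cover); rewrite plus_INR.
set G := INR #|graphs n|; set p := INR #|_|; set q := INR #|_| => cover_R.
have -> : 1 - q / G = (G - q) * / G by field; apply: Rgt_not_eq.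
by apply: Rmult_le_compat_r; [apply/Rlt_le/Rinv_0_lt_compat | lra].
Qed.

Lemma gnp_half_prob_has_biclique n k : (1 < n)%N ->
  gnp_half_prob (@has_biclique n (small_side n) (large_side n k)) <= exp (- INR k).
Proof.
move=> n1; rewrite /gnp_half_prob {2}/graphs card_powerset.
by apply: ratio_le_exp; [rewrite expn_gt0 | exact: card_has_biclique_small_side].
Qed.

End Probability.

Local Open Scope R_scope.

Theorem proposition2p1 :
  exists C0 r : R, 0 < C0 /\ 0 < r /\
    forall n k : nat, sqrt (INR n) < INR k ->
      1 - exp (- Rpower (INR n) r) <= gnp_half_prob (@good_event n k C0).
Proof.
exists (INR 18), (/ 2); split; first by apply/lt_0_INR/ltP.
split=> [|n k lt_k]; first lra.
have exp_pos_n := exp_pos (- Rpower (INR n) (/ 2)).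
have [kn | nk] := leqP k n; last first.
  by rewrite gnp_half_prob_all => [|E]; [lra | exact: good_event_vacuous].
have n1 : (1 < n)%N.
  move: lt_k (le_INR _ _ (leP kn)).
  by case: n {kn exp_pos_n} => [|[|n]] //=; rewrite ?sqrt_0 ?sqrt_1; lra.
have n_pos : 0 < INR n by apply/lt_0_INR/ltP/ltnW.
apply: Rle_trans (gnp_half_prob_compl (not_good_event_has_biclique (k := k) n1)).
have := gnp_half_prob_has_biclique k n1.
rewrite Rpower_sqrt //; have := exp_increasing _ _ (Ropp_lt_contravar _ _ lt_k); lra.
Qed.
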